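(* Let $E$ be a complex Banach lattice and let $A: E \supseteq D(A) \to E$ be a densely defined, closed, real linear operator. Let $u \in E_+$ and let $\varphi \in E'_+$ be strictly positive. Assume: (Domination) there are integers $m_1, m_2 \ge 0$ such that $D(A^{m_1}) \subseteq E_u$ and $D((A')^{m_2}) \subseteq (E')_\varphi$; (Spectral) there is $\lambda_0 \in \mathbb{R}$ which is a geometrically simple eigenvalue of $A$ and an eigenvalue of $A'$, such that $\ker(\lambda_0 - A)$ is spanned by a vector $v$ with $v \succeq u$, and $\ker(\lambda_0 - A')$ contains an element $\psi$ with $\psi \succeq \varphi$. Let $\mu_0$ be a real number in $\rho(A)$. (a) If $R(\mu_0,A)\succeq -u\otimes\varphi$, then $R(\mu_0,A)^n\succeq -u\otimes\varphi$ for all $n\in\mathbb{N}$. (b) If $R(\mu_0,A)\preceq u\otimes\varphi$, then $(-1)^{n-1}R(\mu_0,A)^n\preceq u\otimes\varphi$ for all $n\in\mathbb{N}$.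
   Context: $E_{\mathbb{R}}$ denotes the real part of $E$. A linear operator $A$ is real if $D(A) = (D(A)\cap E_{\mathbb{R}}) + i(D(A)\cap E_{\mathbb{R}})$ and $A$ maps $D(A)\cap E_{\mathbb{R}}$ into $E_{\mathbb{R}}$. $R(\mu,A) = (\mu - A)^{-1}$. For real vectors, $v \succeq u$ means $v \ge cu$ for some $c>0$. For bounded real operators, $T\succeq S$ (equivalently $S\preceq T$) means $T - cS$ is positive for some $c>0$. $u\otimes\varphi$ is $f\mapsto\langle\varphi,f\rangle u$. $\varphi$ strictly positive: $\langle\varphi,f\rangle>0$ for all $0\ne f\in E_+$. $E_u = \{x : |x|\le cu \text{ for some } c\ge0\}$; $(E')_\varphi = \{x'\in E' : |x'|\le c\varphi \text{ for some } c\ge 0\}$. Geometrically simple: one-dimensional eigenspace. *)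

From HB Require Import structures.
From mathcomp Require Import all_boot all_order all_algebra.
From mathcomp Require Import all_classical all_reals all_analysis.
Set Implicit Arguments. Unset Strict Implicit. Unset Printing Implicit Defensive.
Import Order.TTheory GRing.Theory Num.Theory.
Import numFieldNormedType.Exports.
Local Open Scope classical_set_scope.
Local Open Scope ring_scope.

Section BanachLattice.
Context {R : realType} {ER : completeNormedModType R}.

Definition labs (sup : ER -> ER -> ER) (x : ER) : ER := sup x (- x).

Record is_banach_lattice (le : ER -> ER -> Prop) (sup : ER -> ER -> ER) : Prop := {
  bl_refl : forall x, le x x;
  bl_antisym : forall x y, le x y -> le y x -> x = y;
  bl_trans : forall x y z, le x y -> le y z -> le x z;
  bl_add : forall x y z, le x y -> le (x + z) (y + z);
  bl_scale : forall (a : R) x, 0 <= a -> le 0 x -> le 0 (a *: x);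
  bl_sup_l : forall x y, le x (sup x y);
  bl_sup_r : forall x y, le y (sup x y);
  bl_sup_min : forall x y z, le x z -> le y z -> le (sup x y) z;
  bl_norm : forall x y, le (labs sup x) (labs sup y) -> `|x| <= `|y|
}.
End BanachLattice.

(* The complexification E = E_R + i E_R, represented as ER * ER        *)
(* (first component = real part), with the product topology.           *)
(* Complex scalars a + ib are represented as pairs (a, b).             *)
Section Complexification.
Context {R : realType} {ER : completeNormedModType R}.

Definition cplx := (ER * ER)%type.

(* (a + ib)(x + iy) = (ax - by) + i(ay + bx) *)
Definition cxscale (c : R * R) (x : cplx) : cplx :=
  (c.1 *: x.1 - c.2 *: x.2, c.1 *: x.2 + c.2 *: x.1).

Definition cx_real (x : ER) : cplx := (x, 0).

Definition rdual (f : ER -> R) : Prop :=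
  (forall (a : R) x y, f (a *: x + y) = a * f x + f y) /\ continuous f.

(* The dual E' is identified (as usual for complex Banach lattices)    *)
(* with the complexification of (E_R)'; x' = (f1, f2) acts by          *)
(* <f1 + i f2, x1 + i x2> = (f1 x1 - f2 x2) + i (f1 x2 + f2 x1).       *)
Definition cdual := ((ER -> R) * (ER -> R))%type.
Definition is_dual (x' : cdual) : Prop := rdual x'.1 /\ rdual x'.2.
Definition cx_pairing (x' : cdual) (x : cplx) : R * R :=
  (x'.1 x.1 - x'.2 x.2, x'.1 x.2 + x'.2 x.1).
Definition dual_real (f : ER -> R) : cdual := (f, fun _ => 0).
Definition dual_scale (a : R) (x' : cdual) : cdual :=
  (fun x => a * x'.1 x, fun x => a * x'.2 x).

Definition dle (le : ER -> ER -> Prop) (f g : ER -> R) : Prop :=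
  forall x, le 0 x -> f x <= g x.

Definition cpos (le : ER -> ER -> Prop) (x : cplx) : Prop :=
  x.2 = 0 /\ le 0 x.1.

(* principal ideal E_u : |x| <= c u, with the complex modulus           *)
(* |x1 + i x2| = sup_theta |cos theta x1 + sin theta x2|.              *)
Definition ideal_E (le : ER -> ER -> Prop) (u : ER) (x : cplx) : Prop :=
  exists c : R, 0 <= c /\ forall theta : R,
    le (cos theta *: x.1 + sin theta *: x.2) (c *: u) /\
    le (- (cos theta *: x.1 + sin theta *: x.2)) (c *: u).

Definition ideal_Ed (le : ER -> ER -> Prop) (phi : ER -> R) (x' : cdual) : Prop :=
  exists c : R, 0 <= c /\ forall theta : R,
    dle le (fun x => cos theta * x'.1 x + sin theta * x'.2 x) (fun x => c * phi x) /\
    dle le (fun x => - (cos theta * x'.1 x + sin theta * x'.2 x)) (fun x => c * phi x).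

Definition op_linear (D : set cplx) (A : cplx -> cplx) : Prop :=
  D 0 /\ (forall x y, D x -> D y -> D (x + y)) /\
  (forall c x, D x -> D (cxscale c x)) /\
  (forall c x y, D x -> D y -> A (cxscale c x + y) = cxscale c (A x) + A y).

Definition densely_defined (D : set cplx) : Prop := closure D = setT.

Definition op_closed (D : set cplx) (A : cplx -> cplx) : Prop :=
  closed [set p : cplx * cplx | D p.1 /\ p.2 = A p.1].

Definition op_real (D : set cplx) (A : cplx -> cplx) : Prop :=
  (forall x1 x2, D (x1, x2) <-> (D (cx_real x1) /\ D (cx_real x2))) /\
  (forall x, D (cx_real x) -> (A (cx_real x)).2 = 0).

Definition adjoint_graph (D : set cplx) (A : cplx -> cplx) (x' y' : cdual) : Prop :=
  is_dual x' /\ is_dual y' /\ forall x, D x -> cx_pairing x' (A x) = cx_pairing y' x.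

Fixpoint dom_pow {T : Type} (G : T -> T -> Prop) (B : set T) (m : nat) : set T :=
  match m with
  | 0 => B
  | m'.+1 => [set x | exists y, G x y /\ dom_pow G B m' y]
  end.

Definition op_graph (D : set cplx) (A : cplx -> cplx) (x y : cplx) : Prop :=
  D x /\ y = A x.

Definition is_resolvent (D : set cplx) (A : cplx -> cplx) (mu : R) (Rmu : cplx -> cplx) : Prop :=
  (forall y, D (Rmu y) /\ mu *: Rmu y - A (Rmu y) = y) /\
  (forall x, D x -> Rmu (mu *: x - A x) = x) /\
  continuous Rmu.

Definition cx_tensor (u : ER) (phi : cdual) (f : cplx) : cplx :=
  cxscale (cx_pairing phi f) (cx_real u).

Definition op_ge (le : ER -> ER -> Prop) (T S : cplx -> cplx) : Prop :=
  exists c : R, 0 < c /\ forall x, cpos le x -> cpos le (T x - c *: S x).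

End Complexification.

From HB Require Import structures.
From mathcomp Require Import all_boot all_order all_algebra.
From mathcomp Require Import all_classical all_reals all_analysis.
From mathcomp Require Import ring.
Import Order.TTheory GRing.Theory Num.Theory.
Import numFieldNormedType.Exports.
Local Open Scope classical_set_scope.
Local Open Scope ring_scope.

(* The eigenvector [v] lies in D(A^m1), hence in E_u, and the eigenfunctional
   [psi] lies in D((A')^m2), hence in (E')_phi; together with v >= c u and
   psi >= c phi this makes the rank-one operators u (x) phi and v (x) psi
   dominate each other on E_+, so both parts may be proved for v (x) psi.
   Now R := R(mu0, A) satisfies R v = r v and psi o R = r psi with
   r = (mu0 - lambda0)^-1.  If T x + C psi(x) v >= 0 on E_+ for a map T with
   these two eigen-relations, applying this bound to T^n x + C_n psi(x) v >= 0
   gives the bound for T^(n+1) with C_(n+1) = C_n r + C (r^n + C_n psi(v)).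
   Part (b) is the same argument for -R. *)

Section RealDual.
Context {R : realType} {ER : completeNormedModType R} {f : ER -> R}.
Hypothesis f_dual : rdual f.

Lemma rdualD (x y : ER) : f (x + y) = f x + f y.
Proof. by have := f_dual.1 1 x y; rewrite scale1r mul1r. Qed.

Lemma rdual0 : f 0 = 0.
Proof. by apply: (addrI (f 0)); rewrite -rdualD !addr0. Qed.

Lemma rdualZ (a : R) (x : ER) : f (a *: x) = a * f x.
Proof. by have := f_dual.1 a x 0; rewrite !addr0 rdual0 addr0. Qed.

Lemma rdualN (x : ER) : f (- x) = - f x.
Proof. by rewrite -scaleN1r rdualZ mulN1r. Qed.

Lemma rdual_scale (s : R) : rdual (fun x => s * f x).
Proof.
split=> [a x y|]; first by rewrite rdualD rdualZ mulrDr mulrCA.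
by move=> x; apply: continuousM; [exact: cst_continuous | exact: f_dual.2].
Qed.

End RealDual.

Lemma cx_tensor_dual_real {R : realType} {ER : completeNormedModType R}
    (u : ER) (phi : ER -> R) (x : @cplx R ER) :
  cx_tensor u (dual_real phi) x = (phi x.1 *: u, phi x.2 *: u).
Proof. by rewrite /cx_tensor /cx_pairing /cxscale /= !scaler0 subr0 !addr0 subr0 add0r. Qed.

Lemma iter_opp {R : pzRingType} {V : lmodType R} {T : V -> V} :
  (forall (s : R) y, T (s *: y) = s *: T y) ->
  forall n x, iter n (fun y => - T y) x = (-1) ^+ n *: iter n T x.
Proof.
move=> TZ; elim=> [|n IH] x /=; first by rewrite scale1r.
by rewrite IH TZ exprS mulN1r scaleNr.
Qed.

Section BanachLatticeOrder.
Context {R : realType} {ER : completeNormedModType R}.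
Context {le : ER -> ER -> Prop} {sup : ER -> ER -> ER}.
Hypothesis HBL : is_banach_lattice le sup.

Lemma bl_subr_ge0 (a b : ER) : le 0 (b - a) <-> le a b.
Proof.
split=> h.
- by have := bl_add HBL a h; rewrite add0r subrK.
- by have := bl_add HBL (- a) h; rewrite subrr.
Qed.

Lemma bl_addr_ge0 (a b : ER) : le 0 a -> le 0 b -> le 0 (a + b).
Proof.
move=> ha hb; apply: (bl_trans HBL ha).
by have := bl_add HBL a hb; rewrite add0r addrC.
Qed.

Lemma bl_scale2l (s : R) (a b : ER) : 0 <= s -> le a b -> le (s *: a) (s *: b).
Proof.
move=> s_ge0 /bl_subr_ge0 ab; apply/bl_subr_ge0.
by rewrite -scalerBr; apply: (bl_scale HBL).
Qed.

Lemma bl_scale2r (s t : R) (a : ER) : s <= t -> le 0 a -> le (s *: a) (t *: a).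
Proof.
move=> st a_ge0; apply/bl_subr_ge0.
by rewrite -scalerBl; apply: (bl_scale HBL); rewrite // subr_ge0.
Qed.

Local Notation E := (@cplx R ER).

Lemma cpos_add (x y : E) : cpos le x -> cpos le y -> cpos le (x + y).
Proof.
move=> [x2 x1] [y2 y1]; split; first by rewrite /= x2 y2 addr0.
exact: bl_addr_ge0.
Qed.

Lemma cpos_scale (s : R) (x : E) : 0 <= s -> cpos le x -> cpos le (s *: x).
Proof.
move=> s_ge0 [x2 x1]; split; first by rewrite /= x2 scaler0.
exact: (bl_scale HBL).
Qed.

Lemma op_ge_oppP (T S : E -> E) :
  (forall x, cpos le x -> cpos le (S x)) ->
  op_ge le T (fun x => - S x) <->
  exists C : R, forall x, cpos le x -> cpos le (T x + C *: S x).
Proof.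
move=> S_ge0; split.
- by case=> c [_ Tc]; exists c => x /Tc; rewrite scalerN opprK.
- case=> C TC; exists (Num.max C 0 + 1); split.
    by rewrite ltr_pwDr // le_max lexx orbT.
  move=> x x_ge0; rewrite scalerN opprK.
  have -> : T x + (Num.max C 0 + 1) *: S x
            = T x + C *: S x + (Num.max C 0 + 1 - C) *: S x.
    by rewrite -addrA -scalerDl [C + _]addrC subrK.
  apply: cpos_add; first exact: TC.
  apply: cpos_scale; last exact: S_ge0.
  by rewrite subr_ge0 ler_wpDr // le_max lexx.
Qed.

Lemma op_ge_oppr_dom {T S S' : E -> E} {k : R} :
  (forall x, cpos le x -> cpos le (S x)) ->
  (forall x, cpos le x -> cpos le (k *: S x - S' x)) ->
  op_ge le T (fun x => - S' x) -> op_ge le T (fun x => - S x).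
Proof.
move=> S_ge0 S'S [c [c_gt0 Tc]]; apply/op_ge_oppP => //.
exists (c * k) => x x_ge0.
have -> : T x + (c * k) *: S x = T x - c *: - S' x + c *: (k *: S x - S' x).
  by rewrite scalerN opprK scalerBr scalerA addrA addrAC addrK.
by apply: cpos_add; [exact: Tc | apply: cpos_scale; [exact: ltW | exact: S'S]].
Qed.

Lemma op_geNN (T S : E -> E) :
  op_ge le (fun x => - T x) (fun x => - S x) <-> op_ge le S T.
Proof.
have c_inv_ge0 (c : R) : 0 < c -> 0 <= c^-1 by move=> c_gt0; rewrite invr_ge0 ltW.
split=> -[c [c_gt0 hc]]; exists c^-1; rewrite invr_gt0; split=> // x x_ge0;
  have := cpos_scale _ _ (c_inv_ge0 _ c_gt0) (hc x x_ge0).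
- by rewrite scalerN opprK scalerDr scalerN scalerA mulVf ?gt_eqF // scale1r addrC.
- by rewrite scalerBr scalerA mulVf ?gt_eqF // scale1r scalerN opprK addrC.
Qed.

Lemma op_ge_dom {T S S' : E -> E} {k : R} :
  (forall x, cpos le x -> cpos le (S x)) ->
  (forall x, cpos le x -> cpos le (k *: S x - S' x)) ->
  op_ge le S' T -> op_ge le S T.
Proof.
move=> S_ge0 S'S /op_geNN T_ge; apply/op_geNN.
exact: op_ge_oppr_dom S_ge0 S'S T_ge.
Qed.

Lemma cx_tensor_cpos (u : ER) (phi : ER -> R) (x : E) :
  rdual phi -> cpos le x -> cx_tensor u (dual_real phi) x = cx_real (phi x.1 *: u).
Proof.
by move=> phi_dual [x2 _]; rewrite cx_tensor_dual_real x2 (rdual0 phi_dual) scale0r.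
Qed.

Lemma cx_tensor_ge0 (u : ER) (phi : ER -> R) (x : E) :
  le 0 u -> rdual phi -> dle le (fun _ => 0) phi -> cpos le x ->
  cpos le (cx_tensor u (dual_real phi) x).
Proof.
move=> u_ge0 phi_dual phi_ge0 x_ge0; rewrite cx_tensor_cpos //.
by split=> //=; apply: (bl_scale HBL) => //; apply: phi_ge0; case: x_ge0.
Qed.

Lemma cx_tensor_dom {u u' : ER} {phi phi' : ER -> R} {k1 k2 : R} :
  le 0 u' -> 0 <= k1 -> le u (k1 *: u') ->
  rdual phi -> dle le (fun _ => 0) phi -> rdual phi' ->
  dle le phi (fun x => k2 * phi' x) ->
  forall x, cpos le x ->
    cpos le ((k1 * k2) *: cx_tensor u' (dual_real phi') x - cx_tensor u (dual_real phi) x).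
Proof.
move=> u'_ge0 k1_ge0 uu' phi_dual phi_ge0 phi'_dual phiphi' x x_ge0.
rewrite !cx_tensor_cpos //; split; first by rewrite /= scaler0 subr0.
have x1_ge0 : le 0 x.1 by case: x_ge0.
apply/bl_subr_ge0; apply: (bl_trans HBL (bl_scale2l _ _ _ (phi_ge0 _ x1_ge0) uu')).
rewrite /= !scalerA; apply: bl_scale2r => //.
by rewrite mulrC -mulrA ler_wpM2l //; exact: phiphi'.
Qed.

Lemma cx_tensor_dom_inv {u u' : ER} {phi phi' : ER -> R} {a b : R} :
  le 0 u' -> 0 < a -> le (a *: u) u' ->
  rdual phi -> dle le (fun _ => 0) phi -> rdual phi' ->
  0 < b -> dle le (fun x => b * phi x) phi' ->
  forall x, cpos le x ->
    cpos le ((a^-1 * b^-1) *: cx_tensor u' (dual_real phi') x - cx_tensor u (dual_real phi) x).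
Proof.
move=> u'_ge0 a_gt0 au_le phi_dual phi_ge0 phi'_dual b_gt0 bphi_le.
have a_inv_ge0 : 0 <= a^-1 by rewrite invr_ge0 ltW.
apply: cx_tensor_dom => //.
- by have := bl_scale2l a^-1 _ _ a_inv_ge0 au_le; rewrite scalerA mulVf ?gt_eqF // scale1r.
- by move=> x x_ge0; rewrite ler_pdivlMl //; exact: bphi_le.
Qed.

Section RankOne.
Context {v : ER} {psi : ER -> R}.
Hypotheses (v_ge0 : le 0 v) (psi_dual : rdual psi) (psi_ge0 : dle le (fun _ => 0) psi).

Local Notation V := (cx_real v : E).
Local Notation W := (cx_tensor v (dual_real psi)).

Lemma rank_one_ge0 (x : E) : cpos le x -> cpos le (W x).
Proof. exact: cx_tensor_ge0. Qed.

Lemma rank_one_cpos (x : E) : cpos le x -> W x = psi x.1 *: V.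
Proof.
move=> x_ge0; rewrite cx_tensor_cpos //.
by apply: injective_projections; rewrite /= ?scaler0.
Qed.

Lemma op_ge_comp_oppr_rank_one (T1 T2 : E -> E) (t1 t2 : R) :
  (forall y z, T2 (y + z) = T2 y + T2 z) -> (forall s y, T2 (s *: y) = s *: T2 y) ->
  T2 V = t2 *: V -> (forall x, psi (T1 x).1 = t1 * psi x.1) ->
  op_ge le T1 (fun x => - W x) -> op_ge le T2 (fun x => - W x) ->
  op_ge le (T2 \o T1) (fun x => - W x).
Proof.
move=> T2D T2Z T2V psiT1.
move=> /(op_ge_oppP _ _ rank_one_ge0) [C1 T1C1] /(op_ge_oppP _ _ rank_one_ge0) [C2 T2C2].
apply/(op_ge_oppP _ _ rank_one_ge0).
exists (C1 * t2 + C2 * (t1 + C1 * psi v)) => x x_ge0 /=.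
have y_ge0 := T1C1 x x_ge0; have := T2C2 _ y_ge0.
rewrite (rank_one_cpos _ y_ge0) (rank_one_cpos _ x_ge0).
rewrite T2D !T2Z T2V.
have -> : (T1 x + C1 *: (psi x.1 *: V)).1 = (T1 x).1 + (C1 * psi x.1) *: v.
  by rewrite scalerA.
rewrite (rdualD psi_dual) (rdualZ psi_dual) psiT1 !scalerA -addrA -!scalerDl.
suff -> : C1 * psi x.1 * t2 + C2 * (t1 * psi x.1 + C1 * psi x.1 * psi v)
          = (C1 * t2 + C2 * (t1 + C1 * psi v)) * psi x.1 by [].
ring.
Qed.

Lemma op_ge_iter_oppr_rank_one {T : E -> E} {t : R} :
  (forall y z, T (y + z) = T y + T z) -> (forall s y, T (s *: y) = s *: T y) ->
  T V = t *: V -> (forall x, psi (T x).1 = t * psi x.1) ->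
  op_ge le T (fun x => - W x) -> forall n, op_ge le (iter n T) (fun x => - W x).
Proof.
move=> TD TZ TV psiT T_ge.
have psi_iter n x : psi (iter n T x).1 = t ^+ n * psi x.1.
  by elim: n x => [|n IH] x /=; rewrite ?mul1r // psiT IH exprS mulrA.
elim=> [|n IH].
  apply/(op_ge_oppP _ _ rank_one_ge0).
  by exists 0 => x x_ge0; rewrite scale0r addr0.
exact: (op_ge_comp_oppr_rank_one _ _ _ _ TD TZ TV (psi_iter n) IH T_ge).
Qed.

Lemma op_ge_rank_one_signed_iter {T : E -> E} {t : R} :
  (forall y z, T (y + z) = T y + T z) -> (forall s y, T (s *: y) = s *: T y) ->
  T V = t *: V -> (forall x, psi (T x).1 = t * psi x.1) ->
  op_ge le W T -> forall n, (0 < n)%N -> op_ge le W (fun x => (-1) ^+ n.-1 *: iter n T x).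
Proof.
move=> TD TZ TV psiT W_ge_T [//|n] _; apply/op_geNN.
have -> : (fun x => - ((-1) ^+ n.+1.-1 *: iter n.+1 T x)) = iter n.+1 (fun y => - T y).
  by apply/funext => x; rewrite (iter_opp TZ) exprS mulN1r scaleNr.
apply: (op_ge_iter_oppr_rank_one (t := - t)).
- by move=> y z; rewrite TD opprD.
- by move=> s y; rewrite TZ scalerN.
- by rewrite TV scaleNr.
- by move=> y; rewrite /= (rdualN psi_dual) psiT mulNr.
- by apply/op_geNN.
Qed.

End RankOne.

End BanachLatticeOrder.

Lemma ideal_E_fst {R : realType} {ER : completeNormedModType R}
    (le : ER -> ER -> Prop) (u : ER) (x : @cplx R ER) :
  ideal_E le u x -> exists2 c : R, 0 <= c & le x.1 (c *: u).
Proof.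
case=> c [c_ge0 h]; exists c => //.
by have [] := h 0; rewrite cos0 sin0 scale1r scale0r addr0.
Qed.

Lemma ideal_Ed_fst {R : realType} {ER : completeNormedModType R}
    (le : ER -> ER -> Prop) (phi : ER -> R) (x' : @cdual R ER) :
  ideal_Ed le phi x' -> exists2 c : R, 0 <= c & dle le x'.1 (fun x => c * phi x).
Proof.
case=> c [c_ge0 h]; exists c => // x x_ge0.
by have [/(_ x x_ge0)] := h 0; rewrite cos0 sin0 mul1r mul0r addr0.
Qed.

Section Operators.
Context {R : realType} {ER : completeNormedModType R}.
Local Notation E := (@cplx R ER).

Lemma cxscale_real (s : R) (x : E) : cxscale (s, 0) x = s *: x.
Proof. by case: x => a b; rewrite /cxscale /= !scale0r subr0 addr0. Qed.

Lemma cx_pairing_scale (s : R) (x' : @cdual R ER) (x : E) :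
  cx_pairing (dual_scale s x') x = (s * (cx_pairing x' x).1, s * (cx_pairing x' x).2).
Proof. by rewrite /cx_pairing /= mulrBr mulrDr. Qed.

Lemma is_dual_scale (s : R) (x' : @cdual R ER) : is_dual x' -> is_dual (dual_scale s x').
Proof. by case=> h1 h2; split; exact: rdual_scale. Qed.

Lemma dual_scaleA (s t : R) (x' : @cdual R ER) :
  dual_scale s (dual_scale t x') = dual_scale (s * t) x'.
Proof. by rewrite /dual_scale; congr pair; apply/funext => x /=; rewrite mulrA. Qed.

Context {D : set E} {A : E -> E}.

Lemma adjoint_graph_scale (s : R) (x' y' : @cdual R ER) :
  adjoint_graph D A x' y' -> adjoint_graph D A (dual_scale s x') (dual_scale s y').
Proof.
case=> x'_dual [y'_dual h]; split; first exact: is_dual_scale.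
split; first exact: is_dual_scale.
by move=> x Dx; rewrite !cx_pairing_scale h.
Qed.

Lemma adjoint_eigen_dom_pow {x' : @cdual R ER} {lambda : R} :
  adjoint_graph D A x' (dual_scale lambda x') ->
  forall m s, dom_pow (adjoint_graph D A) is_dual m (dual_scale s x').
Proof.
move=> x'_eigen; elim=> [|m IH] s /=; first by apply: is_dual_scale; case: x'_eigen.
exists (dual_scale (s * lambda) x'); split; last exact: IH.
by rewrite -dual_scaleA; exact: adjoint_graph_scale.
Qed.

Lemma adjoint_eigen_fst {psi : ER -> R} {lambda : R} :
  adjoint_graph D A (dual_real psi) (dual_scale lambda (dual_real psi)) ->
  forall x, D x -> psi (A x).1 = lambda * psi x.1.
Proof.
case=> _ [_ h] x Dx; have := congr1 fst (h x Dx).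
by rewrite /= subr0 mulr0 subr0.
Qed.

Lemma eigenfunctional_ideal_Ed {le : ER -> ER -> Prop} {phi psi : ER -> R} {lambda : R} {m : nat} :
  (forall x', dom_pow (adjoint_graph D A) is_dual m x' -> ideal_Ed le phi x') ->
  adjoint_graph D A (dual_real psi) (dual_scale lambda (dual_real psi)) ->
  exists2 k : R, 0 <= k & dle le psi (fun x => k * phi x).
Proof.
move=> Hdom psi_eigen.
have /Hdom/ideal_Ed_fst[k k_ge0 h] := adjoint_eigen_dom_pow psi_eigen m 1.
by exists k => // x /h /=; rewrite mul1r.
Qed.

Hypothesis Hlin : op_linear D A.

Lemma op_linear_domZ (s : R) (x : E) : D x -> D (s *: x).
Proof. by rewrite -cxscale_real; case: Hlin => _ [_ [DZ _]]; exact: DZ. Qed.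

Lemma op_linearD (x y : E) : D x -> D y -> A (x + y) = A x + A y.
Proof.
case: Hlin => _ [_ [_ AL]] Dx Dy.
by have := AL (1, 0) x y Dx Dy; rewrite !cxscale_real !scale1r.
Qed.

Lemma op_linear0 : A 0 = 0.
Proof.
have D0 : D 0 by case: Hlin.
by apply: (addrI (A 0)); rewrite -op_linearD // !addr0.
Qed.

Lemma op_linearZ (s : R) (x : E) : D x -> A (s *: x) = s *: A x.
Proof.
case: Hlin => D0 [_ [_ AL]] Dx.
by have := AL (s, 0) x 0 Dx D0; rewrite !addr0 op_linear0 addr0 !cxscale_real.
Qed.

Lemma eigenvector_dom_pow {lambda : R} {V : E} :
  D V -> A V = lambda *: V -> forall m s, dom_pow (op_graph D A) setT m (s *: V).
Proof.
move=> DV AV; elim=> [|m IH] s //=.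
exists ((s * lambda) *: V); split; last exact: IH.
by split; [exact: op_linear_domZ | rewrite op_linearZ // AV scalerA].
Qed.

Lemma eigenvector_ideal_E {le : ER -> ER -> Prop} {u v : ER} {lambda : R} {m : nat} :
  (forall x, dom_pow (op_graph D A) setT m x -> ideal_E le u x) ->
  D (cx_real v) -> A (cx_real v) = lambda *: cx_real v ->
  exists2 k : R, 0 <= k & le v (k *: u).
Proof.
move=> Hdom DV AV.
by have := eigenvector_dom_pow DV AV m 1; rewrite scale1r => /Hdom/ideal_E_fst.
Qed.

Context {mu : R} {Rmu : E -> E}.
Hypothesis HR : is_resolvent D A mu Rmu.

Lemma resolventZ (s : R) (y : E) : Rmu (s *: y) = s *: Rmu y.
Proof.
have [DRy Ey] := HR.1 y; have [_ [RK _]] := HR.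
rewrite -{1}Ey -(RK _ (op_linear_domZ s _ DRy)) op_linearZ //.
by rewrite scalerBr !scalerA mulrC.
Qed.

Lemma resolventD (y z : E) : Rmu (y + z) = Rmu y + Rmu z.
Proof.
have [[DRy Ey] [DRz Ez]] := (HR.1 y, HR.1 z); have [_ [RK _]] := HR.
rewrite -{1}Ey -{1}Ez -(RK _ (Hlin.2.1 _ _ DRy DRz)) op_linearD //.
by rewrite scalerDr opprD addrACA.
Qed.

Lemma resolvent0 : Rmu 0 = 0.
Proof. by rewrite -(scale0r (0 : E)) resolventZ !scale0r. Qed.

Lemma resolvent_eigenvector {lambda : R} {V : E} :
  D V -> A V = lambda *: V -> V != 0 -> mu != lambda /\ Rmu V = (mu - lambda)^-1 *: V.
Proof.
move=> DV AV V_neq0.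
have RV : Rmu ((mu - lambda) *: V) = V by rewrite scalerBl -AV; exact: HR.2.1.
have mu_neq : mu != lambda.
  by apply: contraNneq V_neq0 => mu_eq; rewrite -RV mu_eq subrr scale0r resolvent0.
split=> //; rewrite -{2}RV resolventZ scalerA mulVf ?scale1r //.
by rewrite subr_eq0.
Qed.

Lemma resolvent_adjoint_eigen {psi : ER -> R} {lambda : R} :
  rdual psi -> (forall x, D x -> psi (A x).1 = lambda * psi x.1) -> mu != lambda ->
  forall y, psi (Rmu y).1 = (mu - lambda)^-1 * psi y.1.
Proof.
move=> psi_dual psiA mu_neq y; have [DRy Ey] := HR.1 y.
rewrite -{2}Ey.
have -> : (mu *: Rmu y - A (Rmu y)).1 = mu *: (Rmu y).1 - (A (Rmu y)).1 by [].
rewrite (rdualD psi_dual) (rdualN psi_dual) (rdualZ psi_dual) !psiA // -mulrBl mulKf //.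
by rewrite subr_eq0.
Qed.

End Operators.

Theorem proposition4p4 (R : realType) (ER : completeNormedModType R)
  (le : ER -> ER -> Prop) (sup : ER -> ER -> ER)
  (HBL : is_banach_lattice le sup)
  (D : set (@cplx R ER)) (A : @cplx R ER -> @cplx R ER)
  (Hlin : op_linear D A) (Hdense : densely_defined D)
  (Hclosed : op_closed D A) (Hreal : op_real D A)
  (u : ER) (Hu : le 0 u)
  (phi : ER -> R) (Hphi : rdual phi) (Hphi_pos : dle le (fun _ => 0) phi)
  (Hphi_strict : forall f, le 0 f -> f <> 0 -> 0 < phi f)
  (m1 m2 : nat)
  (Hdom1 : forall x, dom_pow (op_graph D A) setT m1 x -> ideal_E le u x)
  (Hdom2 : forall x', dom_pow (adjoint_graph D A) is_dual m2 x' ->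
                      ideal_Ed le phi x')
  (lambda0 : R) (v : ER) (Hv0 : v <> 0)
  (Hker : forall x, (D x /\ A x = lambda0 *: x) <->
                    exists c : (R * R)%type, x = cxscale c (cx_real v))
  (Hvu : exists c : R, 0 < c /\ le (c *: u) v)
  (psi : ER -> R) (Hpsi0 : psi <> (fun _ => 0))
  (Hpsi : adjoint_graph D A (dual_real psi) (dual_scale lambda0 (dual_real psi)))
  (Hpsiphi : exists c : R, 0 < c /\ dle le (fun x => c * phi x) psi)
  (mu0 : R) (Rmu : @cplx R ER -> @cplx R ER)
  (HR : is_resolvent D A mu0 Rmu) :
  (op_ge le Rmu (fun f => - cx_tensor u (dual_real phi) f) ->
     forall n : nat, (0 < n)%N ->
       op_ge le (iter n Rmu) (fun f => - cx_tensor u (dual_real phi) f)) /\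
  (op_ge le (cx_tensor u (dual_real phi)) Rmu ->
     forall n : nat, (0 < n)%N ->
       op_ge le (cx_tensor u (dual_real phi))
                (fun f => (-1) ^+ n.-1 *: iter n Rmu f)).
Proof.
set V := cx_real v; set U := cx_tensor u (dual_real phi); set W := cx_tensor v (dual_real psi).
have [DV AV] : D V /\ A V = lambda0 *: V.
  by apply/Hker; exists (1, 0); rewrite cxscale_real scale1r.
have V_neq0 : V != 0 by apply/eqP => /(congr1 fst).
have [mu_neq RV] := resolvent_eigenvector Hlin HR DV AV V_neq0.
have psi_dual : rdual psi := Hpsi.1.1.
have psiR := resolvent_adjoint_eigen HR psi_dual (adjoint_eigen_fst Hpsi) mu_neq.
have [k1 k1_ge0 v_le_u] := eigenvector_ideal_E Hlin Hdom1 DV AV.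
have [k2 k2_ge0 psi_le_phi] := eigenfunctional_ideal_Ed Hdom2 Hpsi.
have [a [a_gt0 u_le_v]] := Hvu; have [b [b_gt0 phi_le_psi]] := Hpsiphi.
have v_ge0 : le 0 v := bl_trans HBL (bl_scale HBL (ltW a_gt0) Hu) u_le_v.
have psi_ge0 : dle le (fun _ => 0) psi.
  move=> x x_ge0; apply: le_trans (phi_le_psi x x_ge0) => /=.
  by apply: mulr_ge0; [exact: ltW | exact: Hphi_pos].
have U_ge0 x : cpos le x -> cpos le (U x) by apply: (cx_tensor_ge0 HBL).
have W_ge0 x : cpos le x -> cpos le (W x) by apply: (cx_tensor_ge0 HBL).
have W_dom_U := cx_tensor_dom HBL Hu k1_ge0 v_le_u psi_dual psi_ge0 Hphi psi_le_phi.
have U_dom_W := cx_tensor_dom_inv HBL v_ge0 a_gt0 u_le_v Hphi Hphi_pos psi_dual b_gt0 phi_le_psi.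
have [R_D R_Z] := (resolventD Hlin HR, resolventZ Hlin HR).
split=> [R_ge n _ | R_le n n_gt0].
- apply: (op_ge_oppr_dom HBL U_ge0 W_dom_U).
  apply: (op_ge_iter_oppr_rank_one HBL v_ge0 psi_dual psi_ge0 R_D R_Z RV psiR).
  exact: (op_ge_oppr_dom HBL W_ge0 U_dom_W).
- apply: (op_ge_dom HBL U_ge0 W_dom_U).
  apply: (op_ge_rank_one_signed_iter HBL v_ge0 psi_dual psi_ge0 R_D R_Z RV psiR) => //.
  exact: (op_ge_dom HBL W_ge0 U_dom_W).
Qed.
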